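(* Let $q\ge2$ be even and let $A(n,m)$ denote the number of $m$-RCD roots in $\Sigma_q^n$. If $m\ge\lceil\log_q n\rceil+1$, then $A(n,m)\ge (q-1)q^{n-1}$.
   Context: $\Sigma_q=\{0,\dots,q-1\}$, $\boldsymbol{x}_{[a,b]}=x_a\cdots x_b$. A complement operation is a fixed bijection $a\mapsto\overline{a}$ on $\Sigma_q$ with $\overline{a}\ne a$, $\overline{\overline{a}}=a$; $\boldsymbol{x}^{RC}=\overline{x_n}\cdots\overline{x_1}$ for $\boldsymbol{x}=x_1\cdots x_n$. For an integer $m\ge2$, a string $\boldsymbol{x}\in\Sigma_q^n$ is an $m$-RCD root if $\boldsymbol{x}_{[i+m,i+2m-1]}\ne\boldsymbol{x}_{[i,i+m-1]}^{RC}$ for every $i\in[1,n-2m+1]$. *)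

From mathcomp Require Import all_boot.
Set Implicit Arguments. Unset Strict Implicit. Unset Printing Implicit Defensive.

(* Alphabet Sigma_q = 'I_q ; strings of length n = n.-tuple 'I_q. *)

Definition complement_op (q : nat) (c : 'I_q -> 'I_q) : Prop :=
  (forall a, c a != a) /\ involutive c.

Definition revcomp (q : nat) (c : 'I_q -> 'I_q) (s : seq 'I_q) : seq 'I_q :=
  rev (map c s).

Definition substr (T : Type) (s : seq T) (i len : nat) : seq T :=
  take len (drop i s).

(* m-RCD root: for every 0-based i with i + 2m <= n (i.e. 1-based i in
   [1, n-2m+1]), x_[i+m, i+2m-1] <> (x_[i, i+m-1])^RC. *)
Definition rcd_root (q : nat) (c : 'I_q -> 'I_q) (m : nat) (x : seq 'I_q) : bool :=
  [forall i : 'I_(size x).+1, (i + 2 * m <= size x) ==>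
     (substr x (i + m) m != revcomp c (substr x i m))].

Definition A_count (q : nat) (c : 'I_q -> 'I_q) (n m : nat) : nat :=
  #|[set x : n.-tuple 'I_q | rcd_root c m x]|.

From mathcomp Require Import all_boot.
From mathcomp Require Import zify.

Set Implicit Arguments.
Unset Strict Implicit.
Unset Printing Implicit Defensive.

(* A string that is not an m-RCD root contains, at some position i with
   i + 2m <= n, a window followed by its reverse complement.  Such a string is
   determined by its letters outside the second window, so each of the at most
   n + 1 - 2m positions accounts for at most q^(n-m) strings.  Since
   n <= q^(m-1), there are at most q^(n-1) non-roots among the q^n strings. *)

Lemma leq_card_bigcup (I T : finType) (P : pred I) (F : I -> {set T}) :
  #|\bigcup_(i | P i) F i| <= \sum_(i | P i) #|F i|.
Proof.
elim/big_rec2: _ => [|i k U _ leUk]; first by rewrite cards0.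
exact: leq_trans (leq_card_setU (F i) U) (leq_add _ leUk).
Qed.

Lemma substr_split (T : Type) (s : seq T) k len :
  s = take k s ++ substr s k len ++ drop (k + len) s.
Proof. by rewrite /substr addnC -drop_drop !cat_take_drop. Qed.

Section Duplication.
Variables (T : eqType) (f : seq T -> seq T) (m i : nat).

Definition dup_at (s : seq T) : bool :=
  substr s (i + m) m == f (substr s i m).

Lemma dup_at_split s : dup_at s ->
  s = take (i + m) s ++ f (drop i (take (i + m) s)) ++ drop (i + 2 * m) s.
Proof.
move/eqP; rewrite {2}/substr take_drop addnC => dup_s.
by rewrite {1}(substr_split s (m + i) m) dup_s (addnC m i) -addnA addnn -mul2n.
Qed.

Lemma dup_at_inj s t : dup_at s -> dup_at t ->
  take (i + m) s = take (i + m) t -> drop (i + 2 * m) s = drop (i + 2 * m) t ->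
  s = t.
Proof.
move=> dup_s dup_t eq_take eq_drop.
by rewrite (dup_at_split dup_s) (dup_at_split dup_t) eq_take eq_drop.
Qed.

End Duplication.

Lemma card_dup_at (T : finType) (f : seq T -> seq T) (n m i : nat) :
  i + 2 * m <= n -> #|[set x : n.-tuple T | dup_at f m i x]| <= #|T| ^ (n - m).
Proof.
move=> window_in.
pose split_out (x : n.-tuple T) :=
  ([tuple of take (i + m) x], [tuple of drop (i + 2 * m) x]).
have split_out_inj :
    {in [set x : n.-tuple T | dup_at f m i x] &, injective split_out}.
  move=> x y; rewrite !inE => dup_x dup_y [eq_take eq_drop].
  exact/val_inj/(dup_at_inj dup_x dup_y).
apply: leq_trans (@leq_card_in _ _ split_out _ split_out_inj) _.
by rewrite card_prod !card_tuple -expnD (_ : _ + _ = n - m) //; lia.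
Qed.

Lemma card_not_rcd_root (q : nat) (c : 'I_q -> 'I_q) (n m : nat) :
  #|~: [set x : n.-tuple 'I_q | rcd_root c m x]| <= (n.+1 - 2 * m) * q ^ (n - m).
Proof.
pose D i := [set x : n.-tuple 'I_q | dup_at (revcomp c) m i x].
have sub_dup : ~: [set x : n.-tuple 'I_q | rcd_root c m x]
                 \subset \bigcup_(i < n.+1 - 2 * m) D i.
  apply/subsetP => x; rewrite !inE negb_forall => /existsP[i].
  rewrite negb_imply negbK => /andP[window_in dup_x].
  have lt_i : i < n.+1 - 2 * m.
    by have := leq_trans window_in (eq_leq (size_tuple x)); lia.
  by apply/bigcupP; exists (Ordinal lt_i); rewrite ?inE.
apply: leq_trans (subset_leq_card sub_dup) _.
apply: leq_trans (leq_card_bigcup _ _) _.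
have card_D (i : 'I_(n.+1 - 2 * m)) : #|D i| <= q ^ (n - m).
  by rewrite -[q in q ^ _]card_ord; apply: card_dup_at; have := ltn_ord i; lia.
apply: (@leq_trans (\sum_(i < n.+1 - 2 * m) q ^ (n - m))).
  by apply: leq_sum => i _; apply: card_D.
by rewrite sum_nat_const card_ord.
Qed.

Lemma windows_exp_leq (q n m : nat) : 1 <= m -> n <= q ^ (m - 1) ->
  (n.+1 - 2 * m) * q ^ (n - m) <= q ^ (n - 1).
Proof.
move=> m_gt0 le_n; have [lt_n2m | le_2mn] := ltnP n (2 * m).
  by rewrite (_ : n.+1 - 2 * m = 0) //; lia.
rewrite (_ : n - 1 = (m - 1) + (n - m)); last by lia.
by rewrite expnD leq_mul2r (leq_trans _ le_n) ?orbT //; lia.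
Qed.

Theorem lemma3 (q : nat) (c : 'I_q -> 'I_q) (n m : nat) :
  2 <= q -> ~~ odd q -> complement_op c -> 2 <= m -> 1 <= n ->
  up_log q n + 1 <= m ->
  (q - 1) * q ^ (n - 1) <= A_count c n m.
Proof.
move=> q_gt1 _ _ _ n_gt0 le_log_m.
have le_n : n <= q ^ (m - 1).
  by apply: leq_trans (up_logP n q_gt1) _; rewrite leq_exp2l //; lia.
have m_gt0 : 1 <= m := leq_trans (leq_addl _ _) le_log_m.
have bad_le := leq_trans (card_not_rcd_root c n m) (windows_exp_leq m_gt0 le_n).
have := cardsC [set x : n.-tuple 'I_q | rcd_root c m x].
have -> : #|{: n.-tuple 'I_q}| = q * q ^ (n - 1).
  by rewrite card_tuple card_ord -expnS subn1 prednK.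
rewrite /A_count mulnBl mul1n; lia.
Qed.
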